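(* Let $\langle\mathcal S,\leadsto\rangle$ be a protein transition system over a set $\mathcal R_\kappa$ of monotone and anti-monotone $\kappa$-reactions. For $\kappa$-solutions $S,T$: if $\Gamma_1;\Gamma_2\vdash S$ and $S\leadsto T$, then $\Gamma_1;\Gamma_2\vdash T$.
   Context: $\kappa$-calculus. Fix a set of protein names $\mathcal P$ and a countable set of names $\mathcal N$. An interface is a finite map $\rho$ from sites to $\mathcal N\cup\{h,v\}$, written as a sum of atoms $i$ (visible), $\bar i$ (hidden), $i^x$ (tied to $x$); $fn(\rho)$ is the set of names in its image and $|\rho,x|=|\{i:\rho(i)=x\}|$. $\kappa$-solutions: $S,T::=\mathbf 0\mid A(\rho)\mid S,T\mid(x)(S)$ with $A\in\mathcal P$, $x\in\mathcal N$; $(x)$ is the only binder, $fn$ as usual. Structural equivalence $\equiv$: least congruence containing $\alpha$-equivalence with '','' associative and commutative with unit $\mathbf 0$, and scope laws $(x)(S,T)\equiv((x)S),T$ if $x\notin fn(T)$, $(x)(y)S\equiv(y)(x)S$, $(x)\mathbf 0\equiv\mathbf 0$. A solution is graph-like if every free name occurs at most twice and every binder binds 0 or 2 occurrences. Connected solutions: $A(\rho)$ is connected; if $S$ is connected so is $(x)(S)$; if $S,T$ are connected and $fn(S)\cap fn(T)\ne\emptyset$ then $S,T$ is connected; connectedness is closed under $\equiv$. Growing relation on interfaces: $\tilde x\vdash\bar i\rhd i$; $\tilde x\vdash i\rhd\bar i$; $\tilde x\vdash i\rhd i^x$ if $x\in\tilde x$; $\tilde x\vdash\rho\rhd\rho$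 if $\tilde x\cap fn(\rho)=\emptyset$; if $\tilde x\vdash\rho\rhd\sigma$ and $\tilde x\vdash\rho'\rhd\sigma'$ then $\tilde x\vdash\rho+\rho'\rhd\sigma+\sigma'$. Growing relation on solutions: $\tilde x\vdash\mathbf 0\rhd\mathbf 0$; if $\tilde x\vdash S\rhd T$ and $\tilde x\vdash\rho\rhd\sigma$ then $\tilde x\vdash S,A(\rho)\rhd T,A(\sigma)$; if $\tilde x\vdash S\rhd T$ and $fn(\sigma)\subseteq\tilde x$ then $\tilde x\vdash S\rhd T,A(\sigma)$. $L\to(\tilde x)R$ is a monotone reaction if $\tilde x\vdash L\rhd R$, $L$ and $(\tilde x)R$ are graph-like and $R$ is connected; $(\tilde x)L\to R$ is anti-monotone if $R\to(\tilde x)L$ is monotone. Given a set $\mathcal R_\kappa$ of monotone and anti-monotone reactions, a protein transition system is $\langle\mathcal S,\leadsto\rangle$ with $\mathcal S$ a set of $\kappa$-solutions and $\leadsto$ the least relation on $\mathcal S$ containing $\mathcal R_\kappa$ and closed under $\equiv$, composition (if $S\leadsto T$ then $S,U\leadsto T,U$) and name restriction (if $S\leadsto T$ then $(x)S\leadsto(x)T$). Typing judgements $\Gamma_1;\Gamma_2\vdash S$ ($\Gamma_1,\Gamma_2$ disjoint finite sets; comma = disjoint union): $\emptyset;\emptyset\vdash\mathbf 0$; if $|\rho,x|\le2$ for all $x\in fn(\rho)$ then $\{x:|\rho,x|=1\};\{x:|\rho,x|=2\}\vdash A(\rho)$; if $\Gamma_1;\Gamma_2\vdash S$ and $x\notin\Gamma_1$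 then $\Gamma_1;\Gamma_2\setminus\{x\}\vdash(x)S$; if $\Gamma_1,\Gamma;\Gamma_2\vdash S$, $\Delta_1,\Gamma;\Delta_2\vdash T$ and $(\Gamma_1\cup\Gamma_2)\cap(\Delta_1\cup\Delta_2)=\emptyset$ then $\Gamma_1,\Delta_1;\Gamma_2,\Delta_2,\Gamma\vdash S,T$. *)

From mathcomp Require Import all_boot.
Set Implicit Arguments. Unset Strict Implicit. Unset Printing Implicit Defensive.

Definition name := nat.
Definition site := nat.

(* Atom states: hidden (bar i), visible (i), tied to a name (i^x). *)
Inductive state := Hid | Vis | Tie of name.

Definition is_tie (x : name) (a : state) : bool :=
  if a is Tie y then y == x else false.

Definition rename_state (f : name -> name) (a : state) : state :=
  if a is Tie y then Tie (f y) else a.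

(* An interface is a finite map from sites to states, represented canonically
   as a list of (site, state) pairs strictly sorted by site. *)
Record iface := Iface { ilist : seq (site * state);
                        isorted : sorted ltn (map fst ilist) }.

Fixpoint lookup_l (l : seq (site * state)) (i : site) : option state :=
  if l is (j, a) :: l' then if j == i then Some a else lookup_l l' i else None.
Definition lookup (r : iface) (i : site) : option state := lookup_l (ilist r) i.

Definition tied (x : name) (r : iface) : nat :=
  count (fun p => is_tie x p.2) (ilist r).
Definition in_fn_iface (x : name) (r : iface) : bool := 0 < tied x r.

Definition atom (i : site) (a : state) : iface := @Iface [:: (i, a)] (erefl true).

Definition isSum (r r' s : iface) : Prop :=
  (forall i, lookup r i = None \/ lookup r' i = None) /\
  (forall i, lookup s i = if lookup r i is Some a then Some a else lookup r' i).

Lemma map_fst_rename (f : state -> state) (l : seq (site * state)) :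
  map fst (map (fun p => (p.1, f p.2)) l) = map fst l.
Proof. by elim: l => [|[i a] l IH] //=; rewrite IH. Qed.

Definition rename_iface (f : name -> name) (r : iface) : iface :=
  @Iface (map (fun p => (p.1, rename_state f p.2)) (ilist r))
         (eq_ind_r (fun s => sorted ltn s) (isorted r) (map_fst_rename _ _)).

Section Solutions.
Variable P : Type.

Inductive sol :=
| Nil
| Prot of P & iface
| Par of sol & sol
| Res of name & sol.

Fixpoint occ (x : name) (S : sol) : nat :=
  match S with
  | Nil => 0
  | Prot _ r => tied x r
  | Par S1 T1 => occ x S1 + occ x T1
  | Res y S1 => if y == x then 0 else occ x S1
  end.

Definition in_fn (x : name) (S : sol) : bool := 0 < occ x S.

Definition swapn (x y z : name) : name :=
  if z == x then y else if z == y then x else z.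

Fixpoint swap_sol (x y : name) (S : sol) : sol :=
  match S with
  | Nil => Nil
  | Prot A r => Prot A (rename_iface (swapn x y) r)
  | Par S1 T1 => Par (swap_sol x y S1) (swap_sol x y T1)
  | Res z S1 => Res (swapn x y z) (swap_sol x y S1)
  end.

Inductive sequiv : sol -> sol -> Prop :=
| se_refl S : sequiv S S
| se_sym S T : sequiv S T -> sequiv T S
| se_trans S T U : sequiv S T -> sequiv T U -> sequiv S U
| se_par S S' T T' : sequiv S S' -> sequiv T T' -> sequiv (Par S T) (Par S' T')
| se_res x S S' : sequiv S S' -> sequiv (Res x S) (Res x S')
| se_alpha x y S : (y = x \/ ~~ in_fn y S) -> sequiv (Res x S) (Res y (swap_sol x y S))
| se_assoc S T U : sequiv (Par (Par S T) U) (Par S (Par T U))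
| se_comm S T : sequiv (Par S T) (Par T S)
| se_unit S : sequiv (Par S Nil) S
| se_scope x S T : ~~ in_fn x T -> sequiv (Res x (Par S T)) (Par (Res x S) T)
| se_resC x y S : sequiv (Res x (Res y S)) (Res y (Res x S))
| se_res0 x : sequiv (Res x Nil) Nil.

Fixpoint binders_ok (S : sol) : Prop :=
  match S with
  | Nil => True
  | Prot _ _ => True
  | Par S1 T1 => binders_ok S1 /\ binders_ok T1
  | Res x S1 => (occ x S1 = 0 \/ occ x S1 = 2) /\ binders_ok S1
  end.

Definition graph_like (S : sol) : Prop :=
  (forall x, occ x S <= 2) /\ binders_ok S.

Inductive connected : sol -> Prop :=
| conn_prot A r : connected (Prot A r)
| conn_res x S : connected S -> connected (Res x S)
| conn_par S T x : connected S -> connected T -> in_fn x S -> in_fn x T ->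
    connected (Par S T)
| conn_equiv S S' : connected S -> sequiv S S' -> connected S'.

Inductive grow_if (xs : seq name) : iface -> iface -> Prop :=
| gi_hv i : grow_if xs (atom i Hid) (atom i Vis)
| gi_vh i : grow_if xs (atom i Vis) (atom i Hid)
| gi_tie i x : x \in xs -> grow_if xs (atom i Vis) (atom i (Tie x))
| gi_id r : (forall x, x \in xs -> ~~ in_fn_iface x r) -> grow_if xs r r
| gi_sum r s r' s' r2 s2 : grow_if xs r s -> grow_if xs r' s' ->
    isSum r r' r2 -> isSum s s' s2 -> grow_if xs r2 s2.

Inductive grow (xs : seq name) : sol -> sol -> Prop :=
| gr_nil : grow xs Nil Nil
| gr_prot S T A r s : grow xs S T -> grow_if xs r s ->
    grow xs (Par S (Prot A r)) (Par T (Prot A s))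
| gr_new S T A s : grow xs S T -> (forall x, in_fn_iface x s -> x \in xs) ->
    grow xs S (Par T (Prot A s)).

Definition resn (xs : seq name) (R : sol) : sol := foldr Res R xs.

Definition monotone (L R' : sol) : Prop :=
  exists (xs : seq name) (R : sol),
    [/\ R' = resn xs R, uniq xs, grow xs L R,
        graph_like L /\ graph_like (resn xs R) & connected R].

Definition antimonotone (L' R : sol) : Prop := monotone R L'.

Inductive step (rules : sol -> sol -> Prop) : sol -> sol -> Prop :=
| st_rule L R : rules L R -> step rules L R
| st_equiv S S' T T' : sequiv S S' -> step rules S' T' -> sequiv T' T ->
    step rules S T
| st_par S T U : step rules S T -> step rules (Par S U) (Par T U)
| st_res x S T : step rules S T -> step rules (Res x S) (Res x T).

(* typing judgements  G1 ; G2 ⊢ S, with name sets as (extensional) predicates *)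
Definition disj (A B : pred name) : Prop := forall x, ~~ (A x && B x).

Inductive typed : pred name -> pred name -> sol -> Prop :=
| ty_nil G1 G2 : G1 =1 pred0 -> G2 =1 pred0 -> typed G1 G2 Nil
| ty_prot G1 G2 A r :
    (forall x, in_fn_iface x r -> tied x r <= 2) ->
    G1 =1 (fun x => tied x r == 1) -> G2 =1 (fun x => tied x r == 2) ->
    typed G1 G2 (Prot A r)
| ty_res G1 G2 H1 H2 x S : typed G1 G2 S -> ~~ G1 x ->
    H1 =1 G1 -> H2 =1 (fun y => G2 y && (y != x)) ->
    typed H1 H2 (Res x S)
| ty_par G1 G G2 D1 D2 H1 H2 S T :
    typed (fun y => G1 y || G y) G2 S -> disj G1 G ->
    typed (fun y => D1 y || G y) D2 T -> disj D1 G ->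
    disj (fun y => G1 y || G2 y) (fun y => D1 y || D2 y) ->
    H1 =1 (fun y => G1 y || D1 y) -> H2 =1 (fun y => [|| G2 y, D2 y | G y]) ->
    typed H1 H2 (Par S T).

End Solutions.

(* A typing judgement G1;G2 |- S holds exactly when S is graph-like and G1, G2
   are the names with one, resp. two, free occurrences in S.  Structural
   equivalence preserves free occurrence counts and graph-likeness.  So does a
   monotone reaction L -> (xs)R: growing only changes the states of sites tied
   to the fresh names xs, which do not occur in L and are bound on the right,
   and both sides are graph-like by definition.  Hence every transition
   preserves the characterisation, and with it the typing. *)
From mathcomp Require Import all_boot.
Set Implicit Arguments. Unset Strict Implicit. Unset Printing Implicit Defensive.

Lemma leq2_cases n : n <= 2 -> [\/ n = 0, n = 1 | n = 2].
Proof. by case: n => [|[|[|n]]] // _; [apply: Or31 | apply: Or32 | apply: Or33]. Qed.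

Definition tie_at (z : name) (o : option state) : bool :=
  if o is Some a then is_tie z a else false.

Definition tied_sites (z : name) (l : seq (site * state)) : seq site :=
  [seq p.1 | p <- l & is_tie z p.2].

Lemma tied_sites_sub z l : {subset tied_sites z l <= map fst l}.
Proof.
elim: l => [|[j a] l IH] k //=; rewrite /tied_sites /= -/(tied_sites z l) in_cons.
case: ifP => _; last by move/IH ->; rewrite orbT.
by rewrite in_cons => /orP [-> | /IH ->]; rewrite ?orbT.
Qed.

Lemma mem_tied_sites z l i :
  uniq (map fst l) -> (i \in tied_sites z l) = tie_at z (lookup_l l i).
Proof.
elim: l => [|[j a] l IH] //= /andP [jl ul]; rewrite /tied_sites /=.
case: (eqVneq j i) => [<-|ji] /=.
  case: ifP => [_|_] /=; first by rewrite in_cons eqxx.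
  by apply/negbTE; apply: contra jl; apply: tied_sites_sub.
by case: ifP => _ /=; [rewrite in_cons eq_sym (negbTE ji) |]; apply: IH.
Qed.

Lemma uniq_tied_sites z l : uniq (map fst l) -> uniq (tied_sites z l).
Proof.
elim: l => [|[j a] l IH] //= /andP [jl ul]; rewrite /tied_sites /= -/(tied_sites z l).
case: ifP => _ //=; rewrite IH // andbT; apply: contra jl; apply: tied_sites_sub.
Qed.

Lemma uniq_iface_sites r : uniq (map fst (ilist r)).
Proof. exact: (sorted_uniq ltn_trans ltnn (isorted r)). Qed.

Lemma tiedE z r : tied z r = size (tied_sites z (ilist r)).
Proof. by rewrite /tied /tied_sites size_map size_filter. Qed.

Lemma eq_tied z r s :
  (forall i, tie_at z (lookup r i) = tie_at z (lookup s i)) -> tied z r = tied z s.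
Proof.
move=> rs; rewrite !tiedE; apply/perm_size/uniq_perm; rewrite ?uniq_tied_sites ?uniq_iface_sites //.
by move=> i; rewrite !mem_tied_sites ?uniq_iface_sites // rs.
Qed.

Lemma in_fn_ifaceP z r :
  reflect (exists i, tie_at z (lookup r i)) (in_fn_iface z r).
Proof.
rewrite /in_fn_iface tiedE -has_predT; apply: (iffP hasP) => [[i] | [i]].
  by rewrite mem_tied_sites ?uniq_iface_sites //; exists i.
by rewrite -mem_tied_sites ?uniq_iface_sites //; exists i.
Qed.

Lemma tied_eq0 z r : (forall i, ~~ tie_at z (lookup r i)) -> tied z r = 0.
Proof.
move=> none; apply/eqP; rewrite -leqn0 leqNgt -/(in_fn_iface z r).
by apply/in_fn_ifaceP => -[i]; apply/negP.
Qed.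

Lemma grow_if_lookup xs r s : grow_if xs r s -> forall i,
  [/\ isSome (lookup r i) = isSome (lookup s i),
      forall z, z \notin xs -> tie_at z (lookup r i) = tie_at z (lookup s i) &
      forall z, z \in xs -> ~~ tie_at z (lookup r i)].
Proof.
elim=> {r s} [i j | i j | i x xin j | r fresh i | r s r' s' r2 s2 _ IH _ IH' [_ r2E] [_ s2E] i].
- by rewrite /lookup /=; case: (i == j).
- by rewrite /lookup /=; case: (i == j).
- rewrite /lookup /=; case: (i == j) => //; split=> // z zxs /=.
  by apply/esym/eqP => xz; rewrite -xz xin in zxs.
- split=> // z zxs; apply/negP => tie.
  by have /negP[] := fresh z zxs; apply/in_fn_ifaceP; exists i.
- by rewrite r2E s2E; case: (IH i); case: (lookup r i); case: (lookup s i).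
Qed.

Section Occurrences.
Variable P : Type.
Implicit Types (S T L R : sol P).

Lemma graph_like_parl S T : graph_like (Par S T) -> graph_like S.
Proof.
by case=> occ2 [okS _]; split=> // z; apply: leq_trans (occ2 z); apply: leq_addr.
Qed.

Lemma graph_like_parr S T : graph_like (Par S T) -> graph_like T.
Proof.
by case=> occ2 [_ okT]; split=> // z; apply: leq_trans (occ2 z); apply: leq_addl.
Qed.

Lemma graph_like_res x S : graph_like (Res x S) -> graph_like S.
Proof.
case=> occ2 [occx okS]; split=> // z; case: (eqVneq x z) => [<-|xz].
  by case: occx => ->.
by move: (occ2 z); rewrite /= (negbTE xz).
Qed.

Lemma grow_occ xs L R : grow xs L R ->
  (forall z, z \notin xs -> occ z L = occ z R) /\ (forall z, z \in xs -> occ z L = 0).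
Proof.
elim=> {L R} [| S T A r s _ [IH IH'] g | S T A s _ [IH IH'] new]; first by [].
- split=> z zxs /=.
    rewrite IH //; congr (_ + _); apply: eq_tied => i.
    by case: (grow_if_lookup g i) => _ ->.
  by rewrite IH' // tied_eq0 // => i; case: (grow_if_lookup g i) => _ _ ->.
- split=> z zxs /=; last exact: IH'.
  rewrite IH // tied_eq0 ?addn0 // => i; apply: contra zxs => tie.
  by apply: new; apply/in_fn_ifaceP; exists i.
Qed.

Lemma occ_resn z xs R : occ z (resn xs R) = if z \in xs then 0 else occ z R.
Proof.
by elim: xs => [|y xs IH] //=; rewrite in_cons IH eq_sym; case: (z == y).
Qed.

Lemma monotone_occ L R : monotone L R ->
  [/\ forall z, occ z L = occ z R, graph_like L & graph_like R].
Proof.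
case=> xs [R0 [-> _ g [glL glR] _]]; split=> // z.
rewrite occ_resn; case: (grow_occ g) => fresh_eq fresh0.
by case: ifPn => zxs; [apply: fresh0 | apply: fresh_eq].
Qed.

Lemma swapnK x y : involutive (swapn x y).
Proof.
move=> z; rewrite /swapn; case: (eqVneq z x) => [->|zx].
  by rewrite eqxx; case: eqP.
by case: (eqVneq z y) => [->|zy]; rewrite ?eqxx // (negbTE zx) (negbTE zy).
Qed.

Lemma swapn_eq x y w z : (swapn x y w == z) = (w == swapn x y z).
Proof. by rewrite -{1}(swapnK x y z) (inj_eq (inv_inj (swapnK x y))). Qed.

Lemma occ_swap x y z S : occ z (swap_sol x y S) = occ (swapn x y z) S.
Proof.
elim: S z => [|A r|S IS T IT|w S IS] z //=.
- by rewrite /tied count_map; apply: eq_count => -[i [] //= v]; rewrite swapn_eq.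
- by rewrite IS IT.
- by rewrite swapn_eq IS.
Qed.

Lemma binders_ok_swap x y S : binders_ok (swap_sol x y S) <-> binders_ok S.
Proof.
elim: S => [|A r|S IS T IT|w S IS] //=; first by move: IS IT; tauto.
by rewrite occ_swap swapnK; move: IS; tauto.
Qed.

Lemma occ_alpha x y z S : (y = x \/ ~~ in_fn y S) ->
  occ z (Res x S) = occ z (Res y (swap_sol x y S)).
Proof.
move=> yfresh; rewrite /= occ_swap.
have occy : y != x -> occ y S = 0.
  by case: yfresh => [->|]; rewrite ?eqxx // /in_fn -eqn0Ngt => /eqP.
rewrite /swapn; case: (eqVneq x z) => [<-|xz]; first by case: (eqVneq y x) => // /occy.
by case: (eqVneq y z) => [yz|_] //; rewrite -yz occy // yz eq_sym.
Qed.

Lemma sequiv_occ S T : sequiv S T ->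
  (forall z, occ z S = occ z T) /\ (binders_ok S <-> binders_ok T).
Proof.
elim=> {S T} /=.
- by [].
- by move=> S T _ [occST okST]; split=> [z|]; [rewrite occST | tauto].
- by move=> S T U _ [occST okST] _ [occTU okTU]; split=> [z|]; [rewrite occST | tauto].
- by move=> S S' T T' _ [occS okS] _ [occT okT]; split=> [z|]; [rewrite occS occT | tauto].
- by move=> x S S' _ [occS okS]; split=> [z|]; rewrite occS //; tauto.
- move=> x y S yfresh; split=> [z|]; first exact: (occ_alpha z yfresh).
  have swapy : swapn x y y = x by rewrite /swapn eqxx; case: eqP.
  by rewrite occ_swap swapy; have := binders_ok_swap x y S; tauto.
- by move=> S T U; split=> [z|]; [rewrite addnA | tauto].
- by move=> S T; split=> [z|]; [rewrite addnC | tauto].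
- by move=> S; split=> [z|]; [rewrite addn0 | tauto].
- move=> x S T; rewrite /in_fn -eqn0Ngt => /eqP occx.
  by split=> [z|]; [case: eqP => // <-; rewrite occx | rewrite occx addn0; tauto].
- move=> x y S; split=> [z|]; first by do 2 case: eqP.
  by case: (eqVneq x y) => [<-|_]; tauto.
- by move=> x; split=> [z|]; [case: eqP | tauto].
Qed.

Section Transitions.
Variable rules : sol P -> sol P -> Prop.
Hypothesis rules_occ : forall L R, rules L R -> forall z, occ z L = occ z R.
Hypothesis rules_graph_like : forall L R, rules L R -> graph_like L -> graph_like R.

Lemma step_occ S T : step rules S T -> graph_like S ->
  (forall z, occ z S = occ z T) /\ graph_like T.
Proof.
elim=> {S T} [L R rLR glL | S S' T T' /sequiv_occ [occS okS] _ IH /sequiv_occ [occT okT]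
            | S T U _ IH glSU | x S T _ IH glxS].
- by split; [apply: rules_occ | apply: rules_graph_like glL].
- case=> occ2 okS1; have [occ' [occ2' okT1]] : (forall z, occ z S' = occ z T') /\ graph_like T'.
    by apply: IH; split; [move=> z; rewrite -occS | apply/okS].
  split; first by move=> z; rewrite occS occ' occT.
  by split; [move=> z; rewrite -occT | apply/okT].
- have [occST [_ okT]] := IH (graph_like_parl glSU); case: glSU => occ2 [_ okU].
  split=> [z|] /=; first by rewrite occST.
  by split=> [z|] //=; rewrite -occST; apply: occ2.
- have [occST [_ okT]] := IH (graph_like_res glxS); case: glxS => occ2 [okx _].
  split=> [z|] /=; first by rewrite occST.
  by split=> [z|] /=; rewrite -!occST //; apply: occ2.
Qed.

End Transitions.

Definition fn_once S : pred name := fun x => occ x S == 1.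
Definition fn_twice S : pred name := fun x => occ x S == 2.

Lemma typed_graph_like G1 G2 S : typed G1 G2 S ->
  [/\ graph_like S, G1 =1 fn_once S & G2 =1 fn_twice S].
Proof.
elim=> {G1 G2 S}.
- by move=> G1 G2 G10 G20; split=> // x; rewrite ?G10 ?G20.
- move=> G1 G2 A r tied2 G1E G2E; split=> //; split=> // x /=.
  by case: (posnP (tied x r)) => [->|] // /tied2.
- move=> G1 G2 H1 H2 x S _ [[occ2 okS] G1E G2E] xG1 H1E H2E; split.
  + split=> [z|] /=; first by case: eqP.
    split=> //; move: xG1; rewrite G1E /fn_once.
    by case/leq2_cases: (occ2 x) => ->; auto.
  + move=> y; rewrite H1E G1E /fn_once /=; case: (eqVneq x y) => [<-|//].
    by move: xG1; rewrite G1E => /negbTE.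
  + by move=> y; rewrite H2E G2E /fn_twice /=; case: (eqVneq x y) => [<-|_]; rewrite ?andbF ?andbT.
- move=> G1 G G2 D1 D2 H1 H2 S T _ [[occ2S okS] GS1 GS2] dG _ [[occ2T okT] GT1 GT2]
    dD dSD H1E H2E.
  have par y : [/\ occ y S + occ y T <= 2, H1 y = (occ y S + occ y T == 1)
                 & H2 y = (occ y S + occ y T == 2)].
    move: (GS1 y) (GS2 y) (GT1 y) (GT2 y) (dG y) (dD y) (dSD y).
    rewrite H1E H2E /fn_once /fn_twice.
    case/leq2_cases: (occ2S y) => ->; case/leq2_cases: (occ2T y) => ->;
    by case: (G1 y); case: (G y); case: (G2 y); case: (D1 y); case: (D2 y).
  by split; [split=> // z; case: (par z) | move=> y; case: (par y) | move=> y; case: (par y)].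
Qed.

Lemma graph_like_typed S G1 G2 : graph_like S ->
  G1 =1 fn_once S -> G2 =1 fn_twice S -> typed G1 G2 S.
Proof.
elim: S G1 G2 => [|A r|S IS T IT|x S IS] G1 G2 glS G1E G2E.
- by apply: ty_nil => x; rewrite ?G1E ?G2E.
- by apply: ty_prot => // x _; case: glS => occ2 _; apply: occ2.
- have [occ2S _] := graph_like_parl glS; have [occ2T _] := graph_like_parr glS.
  have [occ2 _] := glS.
  (* the names shared by [S] and [T] are the names of the context [G] in [ty_par] *)
  apply: (@ty_par _ (fun y => (occ y S == 1) && (occ y T == 0))
                    (fun y => (occ y S == 1) && (occ y T == 1)) (fn_twice S)
                    (fun y => (occ y T == 1) && (occ y S == 0)) (fn_twice T));
    [apply: (IS _ _ (graph_like_parl glS)) | | apply: (IT _ _ (graph_like_parr glS)) | | | |];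
  move=> y /=; rewrite ?G1E ?G2E /fn_once /fn_twice; move: (occ2 y) => /=;
  by case/leq2_cases: (occ2S y) => ->; case/leq2_cases: (occ2T y) => ->.
- have glS' := graph_like_res glS; case: glS => _ [occx _].
  apply: (@ty_res _ (fn_once S) (fn_twice S)); first exact: IS.
  + by rewrite /fn_once; case: occx => ->.
  + move=> y; rewrite G1E /fn_once /=; case: (eqVneq x y) => [<-|//].
    by case: occx => ->.
  + by move=> y; rewrite G2E /fn_twice /=; case: (eqVneq x y) => [<-|_]; rewrite ?andbF ?andbT.
Qed.

Lemma typedP G1 G2 S :
  typed G1 G2 S <-> [/\ graph_like S, G1 =1 fn_once S & G2 =1 fn_twice S].
Proof.
by split=> [/typed_graph_like // | [glS G1E G2E]]; apply: graph_like_typed.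
Qed.

End Occurrences.

Theorem mainTheorem11 (P : Type) (rules : sol P -> sol P -> Prop)
  (Hrules : forall L R, rules L R -> monotone L R \/ antimonotone L R)
  (G1 G2 : pred name) (S T : sol P) :
  typed G1 G2 S -> step rules S T -> typed G1 G2 T.
Proof.
have rules_occ L R : rules L R -> forall z, occ z L = occ z R.
  by case/Hrules => /monotone_occ [occLR _ _] z; rewrite occLR.
have rules_graph_like L R : rules L R -> graph_like L -> graph_like R.
  by case/Hrules => /monotone_occ [].
case/typedP=> glS G1E G2E /(step_occ rules_occ rules_graph_like) /(_ glS) [occST glT].
by apply/typedP; split=> // x; rewrite ?G1E ?G2E /fn_once /fn_twice occST.
Qed.
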